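(* Let $(A,H,D,J)$ be a finite-dimensional real spectral triple and let $B\subseteq\mathrm{End}_{\mathbb{C}}(H)$ be a unital complex $*$-subalgebra such that $B'=B^\circ$ and $\mathcal{C}\ell_D(A)\subseteq B$. Then the following are equivalent: (a) the Hodge property $\mathcal{C}\ell_D(A)'=\mathcal{C}\ell_D(A)^\circ$ holds; (b) $\mathcal{C}\ell_D(A)'\subseteq B^\circ$; (c) $\mathcal{C}\ell_D(A)=B$.
   Context: A finite-dimensional real spectral triple $(A,H,D,J)$ consists of a finite-dimensional complex Hilbert space $H$, a unital (real or complex) $*$-subalgebra $A\subseteq\mathrm{End}_{\mathbb{C}}(H)$, a selfadjoint operator $D$ on $H$, and an antilinear isometry $J$ with $J^2=\varepsilon1$, $JD=\varepsilon'DJ$ ($\varepsilon,\varepsilon'\in\{\pm1\}$; in the even case also $J\gamma=\varepsilon''\gamma J$ for a grading $\gamma$ commuting with $A$ and anticommuting with $D$), such that $[a,JbJ^{-1}]=0$ and $[[D,a],JbJ^{-1}]=0$ for all $a,b\in A$. For $\xi\in\mathrm{End}_{\mathbb{C}}(H)$, $\xi^\circ=J\xi^*J^{-1}$; for a subset $S$, $S^\circ=\{\xi^\circ:\xi\in S\}$ and $S'=\{\xi\in\mathrm{End}_{\mathbb{C}}(H):[\xi,\eta]=0\ \forall\eta\in S\}$. $\mathcal{C}\ell_D(A)$ is the complex $*$-subalgebra of $\mathrm{End}_{\mathbb{C}}(H)$ generated by $A$ and the operators $a[D,b]$, $a,b\in A$. *)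

(* H = C^n with C = R[i], R : realType (a model of the reals). *)
From HB Require Import structures.
From mathcomp Require Import all_boot all_order all_algebra.
From mathcomp Require Import complex.
From mathcomp Require Import reals.
Set Implicit Arguments. Unset Strict Implicit. Unset Printing Implicit Defensive.
Import Order.TTheory GRing.Theory Num.Theory.
Local Open Scope ring_scope.

Section Defs.
Variable R : realType.
Local Notation C := (R[i]).
Variable n : nat.
Local Notation M := 'M[C]_n.

Definition mset := M -> Prop.

Definition adj (x : M) : M := (map_mx Num.conj x)^T.

(* Antilinear operators on C^n are exactly v |-> U (conj v), U a matrix.
   Such a J is an isometry iff U is unitary.  With this encoding,
   J x J^{-1} has matrix U (conj x) U^{-1}. *)
Definition unitary (U : M) : Prop := adj U *m U = 1%:M.
Definition Jsq (U : M) : M := U *m map_mx Num.conj U.          (* matrix of J^2 *)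
Definition Jconj (U x : M) : M := U *m map_mx Num.conj x *m invmx U.
Definition opp (U x : M) : M := Jconj U (adj x).

Definition comm (x y : M) : M := x *m y - y *m x.
Definition sign (e : C) : Prop := e = 1 \/ e = -1.

Definition real_star_subalg (A : mset) : Prop :=
  A 1%:M /\ A 0 /\
  (forall a b, A a -> A b -> A (a + b)) /\
  (forall (r : C) a, r \is Num.real -> A a -> A (r *: a)) /\
  (forall a b, A a -> A b -> A (a *m b)) /\
  (forall a, A a -> A (adj a)).

Definition cplx_star_subalg (B : mset) : Prop :=
  [/\ B 1%:M,
      (forall a b, B a -> B b -> B (a + b)),
      (forall (z : C) a, B a -> B (z *: a)),
      (forall a b, B a -> B b -> B (a *m b)) &
      (forall a, B a -> B (adj a))].

(* finite-dimensional real spectral triple (A, H = C^n, D, J = U o conj),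
   with KO-signs eps, eps' and, in the even case, a grading gam with sign eps'' *)
Definition real_spectral_triple (A : mset) (D U : M) (eps eps' : C)
    (grading : option (M * C)) : Prop :=
  real_star_subalg A /\
  adj D = D /\
  unitary U /\
  sign eps /\ sign eps' /\
  Jsq U = eps *: 1%:M /\
  Jconj U D = eps' *: D /\
      match grading with
      | None => True
      | Some (gam, eps'') =>
          sign eps'' /\ adj gam = gam /\ gam *m gam = 1%:M /\
          (forall a, A a -> comm gam a = 0) /\
          gam *m D = - (D *m gam) /\
          Jconj U gam = eps'' *: gam
      end /\
  (forall a b, A a -> A b -> comm a (Jconj U b) = 0) /\
  (forall a b, A a -> A b -> comm (comm D a) (Jconj U b) = 0).

Definition opp_set (U : M) (S : mset) : mset := fun x => exists2 y, S y & x = opp U y.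
Definition commutant (S : mset) : mset := fun x => forall y, S y -> x *m y = y *m x.

Definition msubset (S T : mset) : Prop := forall x, S x -> T x.
Definition mseteq (S T : mset) : Prop := forall x, S x <-> T x.

Definition gens (A : mset) (D : M) : mset :=
  fun x => A x \/ exists a b, [/\ A a, A b & x = a *m comm D b].
Definition ClD (A : mset) (D : M) : mset :=
  fun x => forall S : mset, cplx_star_subalg S -> msubset (gens A D) S -> S x.

End Defs.

From HB Require Import structures.
From mathcomp Require Import all_boot all_order all_algebra.
From mathcomp Require Import complex.
From mathcomp Require Import reals.
From mathcomp Require Import sesquilinear spectral.
From Stdlib Require Import Classical.
Set Implicit Arguments. Unset Strict Implicit. Unset Printing Implicit Defensive.
Import Order.TTheory GRing.Theory Num.Theory.
Local Open Scope ring_scope.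

(* Everything rests on the bicommutant theorem S'' = S for a unital complex
   *-subalgebra S of M_n: given (b), B' = B° contains Cl_D(A)', so
   B is contained in Cl_D(A)'' = Cl_D(A); the other implications only rewrite
   with B' = B°.  For the bicommutant theorem, let f be the orthogonal
   projection of M_n onto S for the Hilbert-Schmidt inner product.  As S is closed
   under adjoints, f (c m) = c f(m) for c in S, and the matrix coefficients of
   such a left S-linear map commute with S.  Hence f x = x f(1) = x for every
   x in S'', and x lies in the range S of f. *)

Lemma mul_mx_delta (K : pzRingType) m n p (c : 'M[K]_(m, n)) j (l : 'I_p) :
  c *m delta_mx j l = \sum_a c a j *: delta_mx a l.
Proof.
rewrite {1}(matrix_sum_delta c) mulmx_suml; apply: eq_bigr => a _.
rewrite mulmx_suml (bigD1 j) //= big1 => [|b /negbTE njb].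
  by rewrite -scalemxAl mul_delta_mx addr0.
by rewrite -scalemxAl mul_delta_mx_cond njb scaler0.
Qed.

Section LeftModuleEndomorphisms.
Variables (K : comNzRingType) (n : nat) (S : 'M[K]_n -> Prop).
Variable f : {linear 'M[K]_n -> 'M[K]_n}.
Hypothesis f_mull : forall c m, S c -> f (c *m m) = c *m f m.

Lemma linear_mxE m i k : f m i k = \sum_j \sum_l m j l * f (delta_mx j l) i k.
Proof.
rewrite {1}(matrix_sum_delta m) linear_sum summxE; apply: eq_bigr => j _.
by rewrite linear_sum summxE; apply: eq_bigr => l _; rewrite linearZ mxE.
Qed.

Definition lmod_coef k l : 'M[K]_n := \matrix_(i, j) f (delta_mx j l) i k.

Lemma lmod_coefE m i k : f m i k = \sum_l (lmod_coef k l *m m) i l.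
Proof.
rewrite linear_mxE exchange_big; apply: eq_bigr => l _; rewrite mxE.
by apply: eq_bigr => j _; rewrite mxE mulrC.
Qed.

Lemma lmod_coef_comm c k l : S c -> lmod_coef k l *m c = c *m lmod_coef k l.
Proof.
move=> Sc; apply/matrixP => i j; rewrite !mxE.
have /matrixP/(_ i k) := f_mull (delta_mx j l) Sc.
rewrite mul_mx_delta linear_sum summxE mxE /= => cfE.
under eq_bigr do rewrite mxE.
under [RHS]eq_bigr do rewrite mxE.
by rewrite -cfE; apply: eq_bigr => a _; rewrite linearZ mxE mulrC.
Qed.

Lemma lmod_map_bicommutantE x :
    (forall y, (forall s, S s -> y *m s = s *m y) -> x *m y = y *m x) ->
  f x = x *m f 1%:M.
Proof.
move=> x_bicomm; apply/matrixP => i k; rewrite lmod_coefE mxE.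
have xQ l : lmod_coef k l *m x = x *m lmod_coef k l.
  by symmetry; apply: x_bicomm => s Ss; apply: lmod_coef_comm.
under eq_bigr do rewrite xQ mxE.
rewrite exchange_big; apply: eq_bigr => p _.
by rewrite lmod_coefE mulr_sumr; apply: eq_bigr => l _; rewrite mulmx1.
Qed.
End LeftModuleEndomorphisms.

Lemma row_span_subspace (K : fieldType) N (P : 'rV[K]_N -> Prop) :
    P 0 -> (forall u v, P u -> P v -> P (u + v)) ->
    (forall a u, P u -> P (a *: u)) ->
  exists W : 'M[K]_N, forall v, (v <= W)%MS <-> P v.
Proof.
move=> P0 PD PZ.
pose spanned (W : 'M[K]_N) := forall v, (v <= W)%MS -> P v.
have spanned_adds W u : spanned W -> P u -> spanned (W + u)%MS.
  move=> PW Pu v /sub_addsmxP [[a b] /= ->]; apply: PD; first exact/PW/submxMl.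
  by rewrite [b]mx11_scalar mul_scalar_mx; apply: PZ.
apply: NNPP => no_span.
have large_rank k : exists2 W, spanned W & (k <= \rank W)%N.
  elim: k => [|k [W PW kW]]; first by exists 0 => // v; rewrite submx0 => /eqP ->.
  have [u Pu uW] : exists2 u, P u & ~~ (u <= W)%MS.
    apply: NNPP => all_in; apply: no_span; exists W => v; split; first exact: PW.
    by move=> Pv; apply: NNPP => vW; apply: all_in; exists v => //; apply/negP.
  exists (W + u)%MS; first exact: spanned_adds.
  apply: leq_ltn_trans kW _.
  rewrite (ltn_leqif (mxrank_leqif_sup (addsmxSl W u))).
  by rewrite addsmx_sub negb_and uW orbT.
by have [W _] := large_rank N.+1; rewrite ltnNge rank_leq_col.
Qed.

Local Open Scope sesquilinear_scope.

Lemma mxvec_dotmul_trace (C : numClosedFieldType) n (a b : 'M[C]_n) :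
  (mxvec a *m (mxvec b)^t*) 0 0 = \tr (a *m b^t*).
Proof.
rewrite mxE (reindex _ (curry_mxvec_bij _ _)) /=.
rewrite /mxtrace; under [RHS]eq_bigr do rewrite mxE.
by rewrite pair_big; apply: eq_bigr => -[i j] _; rewrite !mxE !mxvecE.
Qed.

Lemma trace_mull_adj (C : numClosedFieldType) n (c y s : 'M[C]_n) :
  \tr (c *m y *m s^t*) = \tr (y *m (c^t* *m s)^t*).
Proof.
by rewrite -mulmxA mxtrace_mulC -mulmxA trmx_mul map_mxM trmxCK.
Qed.

Section StarSubalgebra.
Variables (C : numClosedFieldType) (n : nat) (S : 'M[C]_n -> Prop).
Hypotheses (S1 : S 1%:M) (SD : forall a b, S a -> S b -> S (a + b)).
Hypothesis SZ : forall z a, S a -> S (z *: a).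
Hypothesis SM : forall a b, S a -> S b -> S (a *m b).
Hypothesis SA : forall a, S a -> S (a^t*).

Section OrthogonalProjection.
Variable W : 'M[C]_(n * n).
Hypothesis spanW : forall v, (v <= W)%MS <-> S (vec_mx v).

Lemma ortho_spanP v :
  v *m W^t* = 0 <-> forall s, S s -> \tr (vec_mx v *m s^t*) = 0.
Proof.
split=> [vW s Ss | v_perp].
  have /submxP [a sW] : (mxvec s <= W)%MS by apply/spanW; rewrite mxvecK.
  rewrite -mxvec_dotmul_trace vec_mxK sW trmx_mul map_mxM mulmxA vW mul0mx.
  by rewrite mxE.
apply/matrixP => i j; rewrite ord1 [RHS]mxE.
have /spanW/v_perp : (row j W <= W)%MS by exact: row_sub.
rewrite -mxvec_dotmul_trace !vec_mxK => <-.
by rewrite !mxE; apply: eq_bigr => k _; rewrite !mxE.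
Qed.

Definition projS : {linear 'M[C]_n -> 'M[C]_n} :=
  vec_mx \o mulmxr (proj_ortho W) \o mxvec.

Lemma projS_in m : S (projS m).
Proof. exact/spanW/proj_ortho_sub. Qed.

Lemma projS_id s : S s -> projS s = s.
Proof.
by move=> Ss; rewrite /= proj_ortho_id ?mxvecK //; apply/spanW; rewrite mxvecK.
Qed.

Lemma projS_perp m : (forall s, S s -> \tr (m *m s^t*) = 0) -> projS m = 0.
Proof.
move=> m_perp; rewrite /= proj_ortho_0 ?linear0 //.
by apply/orthomx1P/ortho_spanP; rewrite mxvecK.
Qed.

Lemma projS_compl_perp m s : S s -> \tr ((m - projS m) *m s^t*) = 0.
Proof.
have /orthomx1P/ortho_spanP := proj_ortho_compl_sub W (mxvec m).
by rewrite linearB /= mxvecK; apply.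
Qed.

Lemma projS_mull c m : S c -> projS (c *m m) = c *m projS m.
Proof.
move=> Sc; rewrite -{1}(subrK (projS m) m) mulmxDr linearD.
rewrite [projS (c *m projS m)]projS_id; last by apply: SM => //; apply: projS_in.
rewrite projS_perp ?add0r // => s Ss.
by rewrite trace_mull_adj projS_compl_perp //; apply: SM => //; apply: SA.
Qed.
End OrthogonalProjection.

Theorem star_subalg_bicommutant x :
  (forall y, (forall s, S s -> y *m s = s *m y) -> x *m y = y *m x) -> S x.
Proof.
move=> x_bicomm.
have [W spanW] : exists W : 'M[C]_(n * n), forall v, (v <= W)%MS <-> S (vec_mx v).
  apply: row_span_subspace => [|u v Su Sv|a u Su].
  - by rewrite linear0 -(scale0r 1%:M); apply: SZ.
  - by rewrite linearD; apply: SD.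
  - by rewrite linearZ; apply: SZ.
have := lmod_map_bicommutantE (projS_mull spanW) x_bicomm.
by rewrite [projS W 1%:M]projS_id // mulmx1 => <-; apply: projS_in.
Qed.
End StarSubalgebra.

Section Commutants.
Variables (R : realType) (n : nat).
Implicit Types (S T : mset R n) (U : 'M[R[i]]_n).

Lemma adjE (x : 'M[R[i]]_n) : adj x = x^t*.
Proof. exact: map_trmx. Qed.

Lemma ClD_cplx_star_subalg (A : mset R n) (D : 'M[R[i]]_n) :
  cplx_star_subalg (ClD A D).
Proof.
split=> [|a b Ca Cb|z a Ca|a b Ca Cb|a Ca] S S_alg genS;
  have [S1 SD SZ SM SA] := S_alg.
- exact: S1.
- by apply: SD; [apply: Ca | apply: Cb].
- by apply: SZ; apply: Ca.
- by apply: SM; [apply: Ca | apply: Cb].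
- by apply: SA; apply: Ca.
Qed.

Lemma cplx_star_subalg_bicommutant S :
  cplx_star_subalg S -> msubset (commutant (commutant S)) S.
Proof.
case=> S1 SD SZ SM SA x; apply: star_subalg_bicommutant => // a Sa.
by rewrite -adjE; apply: SA.
Qed.

Lemma commutant_eq S T : mseteq S T -> mseteq (commutant S) (commutant T).
Proof. by move=> ST x; split=> Cx y /ST; apply: Cx. Qed.

Lemma opp_set_sub U S T : msubset S T -> msubset (opp_set U S) (opp_set U T).
Proof. by move=> ST x [y Sy ->]; exists y => //; apply: ST. Qed.

Lemma opp_set_eq U S T : mseteq S T -> mseteq (opp_set U S) (opp_set U T).
Proof. by move=> ST x; split; apply: opp_set_sub => y /ST. Qed.

End Commutants.

Theorem lemma12 (R : realType) (n : nat) (A : mset R n) (D U : 'M[R[i]]_n)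
    (eps eps' : R[i]) (grading : option ('M[R[i]]_n * R[i])) (B : mset R n) :
  real_spectral_triple A D U eps eps' grading ->
  cplx_star_subalg B ->
  mseteq (commutant B) (opp_set U B) ->
  msubset (ClD A D) B ->
  (mseteq (commutant (ClD A D)) (opp_set U (ClD A D)) <->
     msubset (commutant (ClD A D)) (opp_set U B)) /\
  (msubset (commutant (ClD A D)) (opp_set U B) <->
     mseteq (ClD A D) B).
Proof.
move=> _ _ B'_eq ClD_B.
have b_to_c : msubset (commutant (ClD A D)) (opp_set U B) -> mseteq (ClD A D) B.
  move=> ClD'_B x; split; first exact: ClD_B.
  move=> Bx; apply: cplx_star_subalg_bicommutant (ClD_cplx_star_subalg A D) _ _.
  by move=> y /ClD'_B /B'_eq /(_ x Bx) ->.
have c_to_a : mseteq (ClD A D) B ->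
    mseteq (commutant (ClD A D)) (opp_set U (ClD A D)).
  move=> ClD_eq y; apply: iff_trans (commutant_eq ClD_eq y) _.
  exact: iff_trans (B'_eq y) (iff_sym (opp_set_eq U ClD_eq y)).
split; split.
- by move=> ClD'_eq y /(ClD'_eq y).1; apply: opp_set_sub.
- by move=> /b_to_c /c_to_a.
- exact: b_to_c.
- by move=> ClD_eq y /(commutant_eq ClD_eq y).1 /B'_eq.
Qed.
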